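(* Let $K,L\subseteq\Sigma^*$ be regular languages with $\kappa(K)=m\ge 2$ and $\kappa(L)=n\ge 2$. If $K$ and $L$ are both prefix-closed, or both factor-closed, or both subword-closed, then: - $\kappa(K\cap L)\le mn-(m+n-2)$; - $\kappa(K\cup L)\le mn$ and $\kappa(K\oplus L)\le mn$; - $\kappa(K\setminus L)\le mn-(n-1)$. If $K$ and $L$ are both suffix-closed, then $\kappa(K\circ L)\le mn$ for each of $\circ\in\{\cup,\cap,\setminus,\oplus\}$. All these bounds are tight: for every $m,n\ge 2$, every alphabet with $|\Sigma|\ge 4$, each of these classes and each listed operation, there exist languages in that class over $\Sigma$ with $\kappa(K)=m$, $\kappa(L)=n$ that attain the stated bound.
   Context: $\Sigma$ is a finite non-empty alphabet. For $L\subseteq\Sigma^*$ and $w\in\Sigma^*$, $L_w=\{x\mid wx\in L\}$, and $\kappa(L)$ is the number of distinct quotients $L_w$ (the state complexity of $L$). $K\oplus L$ is symmetric difference. A language $L$ is prefix-closed (suffix-, factor-, subword-closed) if whenever $w\in L$, every prefix (suffix, factor, subword) of $w$ is in $L$. Here $x$ is a factor of $w$ if $w=uxv$, and $a_1\cdots a_n$ is a subword of $w$ if $w=w_0a_1w_1\cdots a_nw_n$ for some words $w_i$, i.e. a scattered subsequence. *)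

From mathcomp Require Import all_boot.
Set Implicit Arguments. Unset Strict Implicit. Unset Printing Implicit Defensive.

Definition lang (T : Type) := seq T -> bool.

Definition quot (T : Type) (L : lang T) (w : seq T) : lang T := fun x => L (w ++ x).

(* sc L k : L has exactly k distinct quotients (kappa(L) = k); given by k words
   whose quotients are pairwise distinct and such that every quotient is one of them. *)
Definition sc (T : eqType) (L : lang T) (k : nat) : Prop :=
  exists ws : seq (seq T),
    size ws = k /\
    (forall i j, i < k -> j < k -> quot L (nth [::] ws i) =1 quot L (nth [::] ws j) -> i = j) /\
    (forall w, exists2 u, u \in ws & quot L w =1 quot L u).

Definition prefix_closed (T : Type) (L : lang T) := forall u v, L (u ++ v) -> L u.
Definition suffix_closed (T : Type) (L : lang T) := forall u v, L (u ++ v) -> L v.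
Definition factor_closed (T : Type) (L : lang T) := forall u x v, L (u ++ x ++ v) -> L x.
(* subseq (mathcomp) = scattered subsequence *)
Definition subword_closed (T : eqType) (L : lang T) := forall u w, subseq u w -> L w -> L u.

Inductive lclass := Pref | Fact | Subw | Suff.

Definition in_class (c : lclass) (T : eqType) (L : lang T) : Prop :=
  match c with
  | Pref => prefix_closed L
  | Fact => factor_closed L
  | Subw => subword_closed L
  | Suff => suffix_closed L
  end.

Inductive lop := Inter | Union | Diff | Symdiff.

Definition binop (o : lop) (T : Type) (K L : lang T) : lang T :=
  match o with
  | Inter => fun w => K w && L w
  | Union => fun w => K w || L w
  | Diff => fun w => K w && ~~ L w
  | Symdiff => fun w => K w (+) L w
  end.

Definition bound (c : lclass) (o : lop) (m n : nat) : nat :=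
  match c, o with
  | Suff, _ => m * n
  | _, Inter => m * n - (m + n - 2)
  | _, Union => m * n
  | _, Symdiff => m * n
  | _, Diff => m * n - (n - 1)
  end.

From mathcomp Require Import all_boot zify.
From Stdlib Require Import Classical ClassicalEpsilon.
Set Implicit Arguments. Unset Strict Implicit. Unset Printing Implicit Defensive.

(* The quotient of K o L by w depends only on the pair (K_w, L_w), hence the bound mn.
   A prefix-closed language with at least two quotients has the empty quotient as a
   sink; all pairs with an empty K-component (for \ and \cap) or an empty
   L-component (for \cap) yield the empty quotient, which saves n - 1, resp.
   m + n - 2, states. Factor- and subword-closed languages are prefix-closed.
   For tightness, K (resp. L) consists of the words with fewer than m - 1 letters a
   (resp. n - 1 letters b), which is subword-closed; in the suffix-closed case only the
   a's after the last c and the b's after the last d are counted. Enough words a^i b^j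
   are pairwise separated by explicit suffixes to reach the upper bound, which in turn
   shows that they represent all quotients. *)

Definition separated (T : Type) (X : lang T) (u v : seq T) := exists x, X (u ++ x) != X (v ++ x).

Section Quotients.
Variable T : eqType.
Implicit Types (X : lang T) (u v w : seq T).

Lemma separated_sym X u v : separated X u v -> separated X v u.
Proof. by case=> x ne; exists x; rewrite eq_sym. Qed.

Lemma separated_quot X u v : separated X u v -> ~ quot X u =1 quot X v.
Proof. by case=> x /negP ne e; apply: ne; apply/eqP; exact: e x. Qed.

Lemma sc_classifier X k : sc X k ->
  exists2 f : seq T -> nat, (forall w, f w < k) & (forall u v, f u = f v <-> quot X u =1 quot X v).
Proof.
case=> ws [size_ws [inj_ws cover_ws]].
pose P w i := i < k /\ quot X w =1 quot X (nth [::] ws i).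
have exP w : exists i, P w i.
  have [u u_ws e] := cover_ws w.
  by exists (index u ws); split; [rewrite -size_ws index_mem | rewrite nth_index].
pose f w := epsilon (inhabits 0) (P w).
have fP w : P w (f w) := epsilon_spec _ _ (exP w).
exists f => [w|u v]; first by case: (fP w).
have [ltu eu] := fP u; have [ltv ev] := fP v.
split=> [e x|e]; first by rewrite eu e -ev.
by apply: inj_ws => // x; rewrite -eu -ev.
Qed.

Lemma quot_basis X ws : exists ws',
  [/\ size ws' <= size ws, uniq ws', {in ws' &, forall u v, quot X u =1 quot X v -> u = v}
    & forall u, u \in ws -> exists2 v, v \in ws' & quot X u =1 quot X v].
Proof.
elim: ws => [|u ws [ws' [le_ws' uniq_ws' inj_ws' cover_ws']]]; first by exists [::].
have [[v v_ws' e]|fresh] := classic (exists2 v, v \in ws' & quot X u =1 quot X v).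
  exists ws'; split => //; first exact: leqW.
  by move=> w; rewrite inE => /predU1P [->|/cover_ws']; first exists v.
exists (u :: ws'); split => /=.
- by rewrite ltnS.
- by rewrite uniq_ws' andbT; apply/negP => u_ws'; apply: fresh; exists u.
- move=> w w'; rewrite !inE => /predU1P [->|w_ws'] /predU1P [->|w'_ws'] e //.
  + by case: fresh; exists w'.
  + by case: fresh; exists w => // x; rewrite e.
  + exact: inj_ws'.
- move=> w; rewrite inE => /predU1P [->|/cover_ws' [v v_ws' e]]; first by exists u; rewrite ?mem_head.
  by exists v; rewrite // inE v_ws' orbT.
Qed.

Lemma sc_le_cover X ws : (forall w, exists2 u, u \in ws & quot X w =1 quot X u) ->
  exists2 k, k <= size ws & sc X k.
Proof.
move=> cover_ws; have [ws' [le_ws' uniq_ws' inj_ws' cover]] := quot_basis X ws.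
exists (size ws') => //; exists ws'; split; [by [] | split].
- move=> i j lti ltj e; apply/eqP; rewrite -(nth_uniq [::] lti ltj uniq_ws').
  by apply/eqP/inj_ws'; rewrite ?mem_nth.
- move=> w; have [u u_ws e] := cover_ws w; have [v v_ws' e'] := cover u u_ws.
  by exists v => // x; rewrite e e'.
Qed.

Lemma sc_le_map X (V : eqType) (g : seq T -> V) (S : seq V) :
  (forall w, g w \in S) -> (forall u v, g u = g v -> quot X u =1 quot X v) ->
  exists2 k, k <= size S & sc X k.
Proof.
move=> gS g_quot.
pose pick s := epsilon (inhabits [::]) (fun w => g w = s).
have pickP w : g (pick (g w)) = g w.
  by apply: (epsilon_spec _ (fun w' => g w' = g w)); exists w.
rewrite -(size_map pick); apply: sc_le_cover => w.
by exists (pick (g w)); [apply: map_f | apply: g_quot; rewrite pickP].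
Qed.

Lemma sc_le_live X (V : eqType) (h : seq T -> V) (S : seq V) :
  (forall u v, h u = h v -> quot X u =1 quot X v) ->
  (forall w, h w \notin S -> forall x, X (w ++ x) = false) ->
  exists2 k, k <= (size S).+1 & sc X k.
Proof.
move=> h_quot dead.
pose g w := if h w \in S then Some (h w) else None.
have := @sc_le_map X _ g (None :: map Some S); rewrite /= size_map; apply.
  by move=> w; rewrite /g; case: ifP => hS; rewrite inE //= (mem_map Some_inj).
move=> u v; rewrite /g; case: ifP => hu; case: ifP => hv //; first by case=> /h_quot.
by move=> _ x; rewrite /quot !dead ?hu ?hv.
Qed.

Lemma sc_of_separated X (V : eqType) (S : seq V) (rep : V -> seq T) k :
  sc X k -> k <= size S -> uniq S ->
  {in S &, forall s s', s != s' -> separated X (rep s) (rep s')} -> sc X (size S).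
Proof.
move=> scX leS uniqS sepS.
suff leSk : size S <= k by have -> : size S = k by apply/eqP; rewrite eqn_leq leSk.
have [f ltf fP] := sc_classifier scX.
rewrite -(size_map (f \o rep)) -(size_iota 0 k); apply: uniq_leq_size.
  rewrite map_inj_in_uniq // => s s' sS s'S /= /fP e; apply/eqP/negPn/negP => ne.
  exact: separated_quot (sepS s s' sS s'S ne) e.
by move=> _ /mapP [s _ ->]; rewrite mem_iota add0n ltf.
Qed.

Lemma separated_lex X (rep : nat * nat -> seq T) (S : seq (nat * nat)) :
  (forall i j i' j', (i, j) \in S -> (i', j') \in S -> i < i' ->
     separated X (rep (i, j)) (rep (i', j'))) ->
  (forall i j j', (i, j) \in S -> (i, j') \in S -> j < j' ->
     separated X (rep (i, j)) (rep (i, j'))) ->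
  {in S &, forall s s', s != s' -> separated X (rep s) (rep s')}.
Proof.
move=> sep_fst sep_snd [i j] [i' j'] s s' ne.
case: (ltngtP i i') => [lt|gt|eq]; first exact: sep_fst.
  exact: separated_sym (sep_fst _ _ _ _ s' s gt).
subst i'.
case: (ltngtP j j') => [lt|gt|eq']; first exact: sep_snd.
  exact: separated_sym (sep_snd _ _ _ s' s gt).
by rewrite eq' eqxx in ne.
Qed.

End Quotients.

Lemma mem_allpairs_pair (S S' : eqType) (s : seq S) (s' : seq S') x y :
  ((x, y) \in [seq (i, j) | i <- s, j <- s']) = (x \in s) && (y \in s').
Proof.
apply/allpairsP/andP => [[[i j] /= [xs ys [-> ->]]] | [xs ys]]; first by [].
by exists (x, y).
Qed.

Definition grid p q : seq (nat * nat) := [seq (i, j) | i <- iota 0 p, j <- iota 0 q].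

Lemma mem_grid p q i j : ((i, j) \in grid p q) = (i < p) && (j < q).
Proof. by rewrite mem_allpairs_pair !mem_iota. Qed.

Lemma size_grid p q : size (grid p q) = p * q.
Proof. by rewrite size_allpairs !size_iota. Qed.

Lemma grid_uniq p q : uniq (grid p q).
Proof. by apply: allpairs_uniq; rewrite ?iota_uniq // => -[? ?] [? ?]. Qed.

Lemma factor_closed_prefix_closed (T : Type) (L : lang T) : factor_closed L -> prefix_closed L.
Proof. by move=> fL u v; apply: (fL [::]). Qed.

Lemma subword_closed_factor_closed (T : eqType) (L : lang T) : subword_closed L -> factor_closed L.
Proof.
move=> sL u x v; apply: sL.
exact: subseq_trans (prefix_subseq x v) (suffix_subseq u (x ++ v)).
Qed.

Section UpperBounds.
Variable T : eqType.
Implicit Types K L : lang T.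

Lemma quot_binop o K L u v : quot K u =1 quot K v -> quot L u =1 quot L v ->
  quot (binop o K L) u =1 quot (binop o K L) v.
Proof. by move=> eK eL x; move: (eK x) (eL x); rewrite /quot; case: o => /= -> ->. Qed.

Lemma sc_binop_le_mul o K L m n : sc K m -> sc L n ->
  exists2 k, k <= m * n & sc (binop o K L) k.
Proof.
move=> /sc_classifier [fK ltK fKP] /sc_classifier [fL ltL fLP].
have := @sc_le_map _ (binop o K L) _ (fun w => (fK w, fL w)) (grid m n).
rewrite size_grid; apply=> [w|u v [/fKP eK /fLP eL]]; first by rewrite mem_grid ltK ltL.
exact: quot_binop.
Qed.

Lemma sc_prefix_closed_sink K m : prefix_closed K -> 1 < m -> sc K m ->
  exists w0, forall w, quot K w =1 quot K w0 -> forall x, K (w ++ x) = false.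
Proof.
move=> pK lt1m [ws [size_ws [inj_ws _]]].
have [w0 Kw0] : exists w0, ~~ K w0.
  apply: NNPP => full.
  have Kall w : K w by apply: NNPP => /negP nKw; apply: full; exists w.
  have e01 : quot K (nth [::] ws 0) =1 quot K (nth [::] ws 1) by move=> x; rewrite /quot !Kall.
  by have := inj_ws 0 1 (ltnW lt1m) lt1m e01.
exists w0 => w e x; rewrite -[LHS]/(quot K w x) e.
by apply: contraNF Kw0 => /pK.
Qed.

Lemma sc_inter_le K L m n : prefix_closed K -> prefix_closed L -> 1 < m -> 1 < n ->
  sc K m -> sc L n -> exists2 k, k <= m * n - (m + n - 2) & sc (binop Inter K L) k.
Proof.
move=> pK pL lt1m lt1n scK scL.
have [wK deadK] := sc_prefix_closed_sink pK lt1m scK.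
have [wL deadL] := sc_prefix_closed_sink pL lt1n scL.
have [fK ltK fKP] := sc_classifier scK; have [fL ltL fLP] := sc_classifier scL.
have := @sc_le_live _ (binop Inter K L) _ (fun w => (fK w, fL w))
  [seq (i, j) | i <- rem (fK wK) (iota 0 m), j <- rem (fL wL) (iota 0 n)].
rewrite size_allpairs !size_rem ?mem_iota ?ltK ?ltL // !size_iota.
have -> : (m.-1 * n.-1).+1 = m * n - (m + n - 2) by nia.
apply=> [u v [/fKP eK /fLP eL]|w]; first exact: quot_binop.
rewrite mem_allpairs_pair !mem_rem_uniq ?iota_uniq // !inE !mem_iota ltK ltL !andbT.
by rewrite negb_and !negbK => /orP [/eqP/fKP/deadK dK | /eqP/fLP/deadL dL] x /=;
  rewrite ?dK ?dL ?andbF.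
Qed.

Lemma sc_diff_le K L m n : prefix_closed K -> 1 < m -> 1 < n ->
  sc K m -> sc L n -> exists2 k, k <= m * n - (n - 1) & sc (binop Diff K L) k.
Proof.
move=> pK lt1m lt1n scK scL.
have [wK deadK] := sc_prefix_closed_sink pK lt1m scK.
have [fK ltK fKP] := sc_classifier scK; have [fL ltL fLP] := sc_classifier scL.
have := @sc_le_live _ (binop Diff K L) _ (fun w => (fK w, fL w))
  [seq (i, j) | i <- rem (fK wK) (iota 0 m), j <- iota 0 n].
rewrite size_allpairs !size_rem ?mem_iota ?ltK // !size_iota.
have -> : (m.-1 * n).+1 = m * n - (n - 1) by nia.
apply=> [u v [/fKP eK /fLP eL]|w]; first exact: quot_binop.
rewrite mem_allpairs_pair !mem_rem_uniq ?iota_uniq // !inE !mem_iota ltK ltL !andbT.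
by rewrite negbK => /eqP/fKP/deadK dK x /=; rewrite dK.
Qed.

Theorem sc_binop_le_bound c o K L m n : 1 < m -> 1 < n -> sc K m -> sc L n ->
  in_class c K -> in_class c L -> exists2 k, k <= bound c o m n & sc (binop o K L) k.
Proof.
move=> lt1m lt1n scK scL cK cL.
have prefix_bound : prefix_closed K -> prefix_closed L ->
    exists2 k, k <= bound Pref o m n & sc (binop o K L) k.
  by case: o => pK pL;
    [exact: sc_inter_le | exact: sc_binop_le_mul | exact: sc_diff_le | exact: sc_binop_le_mul].
case: c cK cL => cK cL; last by clear prefix_bound; case: o; exact: sc_binop_le_mul.
- exact: prefix_bound.
- by apply: prefix_bound; apply: factor_closed_prefix_closed.
- by apply: prefix_bound; apply/factor_closed_prefix_closed/subword_closed_factor_closed.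
Qed.

End UpperBounds.

Section RunCount.
Variables (T : eqType) (reset : pred T) (a : T).
Implicit Types (k r : nat) (w x : seq T).

(* [rcount k w]: the number of letters [a] in [w] after its last [reset] letter,
   plus [k] if [w] has no [reset] letter. *)
Definition rcount k w := foldl (fun k y => if reset y then 0 else k + (y == a)) k w.

Definition below r : lang T := fun w => rcount 0 w < r.

Lemma rcount_cons k y w : rcount k (y :: w) = rcount (if reset y then 0 else k + (y == a)) w.
Proof. by []. Qed.

Lemma rcount_cat k w x : rcount k (w ++ x) = rcount (rcount k w) x.
Proof. exact: foldl_cat. Qed.

Lemma rcount_reset k y w : reset y -> rcount k (y :: w) = rcount 0 w.
Proof. by move=> ry; rewrite rcount_cons ry. Qed.

Lemma rcount_skip k y w : ~~ reset y -> y != a -> rcount k (y :: w) = rcount k w.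
Proof. by move=> /negbTE ry /negbTE ya; rewrite rcount_cons ry ya addn0. Qed.

Lemma rcount_nseq k t : ~~ reset a -> rcount k (nseq t a) = k + t.
Proof.
move=> ra; elim: t k => [|t IH] k; first by rewrite addn0.
by rewrite rcount_cons (negbTE ra) eqxx IH addn1 addSnnS.
Qed.

Lemma rcount_nseq_skip k t y : ~~ reset y -> y != a -> rcount k (nseq t y) = k.
Proof. by move=> ry ya; elim: t => // t IH; rewrite [nseq _ _]/= rcount_skip. Qed.

Lemma rcount_mono k k' w : k <= k' -> rcount k w <= rcount k' w.
Proof.
elim: w k k' => [|y w IH] k k' le_k //; rewrite !rcount_cons.
by case: (reset y) => //; apply: IH; rewrite leq_add2r.
Qed.

Lemma rcount_ltn_minn k w r : (rcount k w < r) = (rcount (minn k r) w < r).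
Proof.
elim: w k => [|y w IH] k; first by rewrite /= gtn_min ltnn orbF.
rewrite !rcount_cons; case: (reset y) => //.
rewrite IH [RHS]IH; congr (rcount _ w < r); case: (y == a) => /=; lia.
Qed.

Lemma below_suffix_closed r : suffix_closed (below r).
Proof.
by move=> u v; rewrite /below rcount_cat; apply: leq_ltn_trans; apply: rcount_mono.
Qed.

Lemma sc_below r : ~~ reset a -> sc (below r) r.+1.
Proof.
move=> ra.
have [k le_k sc_k] : exists2 k, k <= r.+1 & sc (below r) k.
  have := @sc_le_map T (below r) _ (fun w => minn (rcount 0 w) r) (iota 0 r.+1).
  rewrite size_iota; apply=> [w|u v e x]; first by rewrite mem_iota ltnS geq_minr.
  by rewrite /quot /below !rcount_cat [LHS]rcount_ltn_minn [RHS]rcount_ltn_minn e.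
rewrite -(size_iota 0 r.+1); apply: (sc_of_separated (rep := nseq^~ a) sc_k).
- by rewrite size_iota.
- exact: iota_uniq.
have sep i i' : i < i' <= r -> separated (below r) (nseq i a) (nseq i' a).
  move=> /andP [lt le]; exists (nseq (r - i') a).
  by rewrite /below !rcount_cat !rcount_nseq //; apply/negP; lia.
move=> i i'; rewrite !mem_iota !add0n !ltnS /= => le_i le_i' ne.
case: (ltngtP i i') => [lt|gt|eq]; first by apply: sep; rewrite lt.
  by apply: separated_sym; apply: sep; rewrite gt.
by rewrite eq eqxx in ne.
Qed.

End RunCount.

Lemma rcount_pred0 (T : eqType) (a : T) k w : rcount pred0 a k w = k + count_mem a w.
Proof.
elim: w k => [|y w IH] k; first by rewrite addn0.
by rewrite rcount_cons IH /= addnA.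
Qed.

Lemma below0_subword_closed (T : eqType) (a : T) r : subword_closed (below pred0 a r).
Proof.
move=> u w sub; rewrite /below !rcount_pred0 !add0n; apply: leq_ltn_trans.
exact: leq_count_subseq.
Qed.

Lemma below0_in_class c (T : eqType) (a : T) r : c <> Suff -> in_class c (below pred0 a r).
Proof.
have sub := @below0_subword_closed _ a r; have fact := subword_closed_factor_closed sub.
by case: c => //= _; exact: factor_closed_prefix_closed.
Qed.

Definition boolop (o : lop) (x y : bool) : bool :=
  match o with
  | Inter => x && y
  | Union => x || y
  | Diff => x && ~~ y
  | Symdiff => x (+) y
  end.

Lemma binopE o (T : Type) (K L : lang T) w : binop o K L w = boolop o (K w) (L w).
Proof. by case: o. Qed.

Lemma addn_subn_ltn i i' r : i < i' -> i' <= r -> i + (r - i') < r.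
Proof. lia. Qed.

Lemma addn_subnK_ltnF i r : i <= r -> (i + (r - i) < r) = false.
Proof. by move=> le; rewrite subnKC // ltnn. Qed.

Lemma addn_ltnF j r : (j + r < r) = false.
Proof. by rewrite ltnNge leq_addl. Qed.

Section PairSeparation.
Variables (T : eqType) (resetK resetL : pred T) (a b : T) (r1 r2 : nat).
Hypotheses (a_b : a != b) (nKa : ~~ resetK a) (nKb : ~~ resetK b)
  (nLa : ~~ resetL a) (nLb : ~~ resetL b).
Local Notation K := (below resetK a r1).
Local Notation L := (below resetL b r2).

Let b_a : b != a. Proof. by rewrite eq_sym. Qed.

Definition ab i j : seq T := nseq i a ++ nseq j b.

Lemma rcount_abK k i j : rcount resetK a k (ab i j) = k + i.
Proof. by rewrite /ab rcount_cat rcount_nseq // rcount_nseq_skip. Qed.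

Lemma rcount_abL k i j : rcount resetL b k (ab i j) = k + j.
Proof. by rewrite /ab rcount_cat (@rcount_nseq_skip _ _ _ _ _ a) // rcount_nseq. Qed.

Lemma separated_abP o i j i' j' x :
  boolop o (rcount resetK a i x < r1) (rcount resetL b j x < r2) !=
  boolop o (rcount resetK a i' x < r1) (rcount resetL b j' x < r2) ->
  separated (binop o K L) (ab i j) (ab i' j').
Proof. by exists x; rewrite !binopE /below !(rcount_cat _ _ _ (ab _ _)) !rcount_abK !rcount_abL !add0n. Qed.

Lemma separated_fst o i j i' j' : o <> Inter -> i < i' -> i' <= r1 ->
  separated (binop o K L) (ab i j) (ab i' j').
Proof.
move=> oI lt le; apply: (separated_abP (x := ab (r1 - i') r2)).
rewrite !rcount_abK !rcount_abL addn_subn_ltn // addn_subnK_ltnF // !addn_ltnF.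
by case: o oI.
Qed.

Lemma separated_fst_inter i j i' j' : i < i' -> i' <= r1 -> j < r2 -> j' < r2 ->
  separated (binop Inter K L) (ab i j) (ab i' j').
Proof.
move=> lt le ltj ltj'; apply: (separated_abP (x := ab (r1 - i') 0)).
by rewrite !rcount_abK !rcount_abL !addn0 addn_subn_ltn // addn_subnK_ltnF // ltj ltj'.
Qed.

Lemma separated_snd o i j j' : o <> Inter -> o <> Diff -> j < j' -> j' <= r2 ->
  separated (binop o K L) (ab i j) (ab i j').
Proof.
move=> oI oD lt le; apply: (separated_abP (x := ab r1 (r2 - j'))).
rewrite !rcount_abK !rcount_abL addn_subn_ltn // addn_subnK_ltnF // addn_ltnF.
by case: o oI oD.
Qed.

Lemma separated_snd_live o i j j' : o <> Union -> o <> Symdiff -> i < r1 -> j < j' -> j' <= r2 ->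
  separated (binop o K L) (ab i j) (ab i j').
Proof.
move=> oU oS lti lt le; apply: (separated_abP (x := ab 0 (r2 - j'))).
rewrite !rcount_abK !rcount_abL addn0 lti addn_subn_ltn // addn_subnK_ltnF //.
by case: o oU oS.
Qed.

End PairSeparation.

Section TightPrefix.
Variables (T : eqType) (a b : T) (r1 r2 : nat).
Hypotheses (a_b : a != b) (r1_gt0 : 0 < r1) (r2_gt0 : 0 < r2).
Local Notation K := (below pred0 a r1).
Local Notation L := (below pred0 b r2).

Lemma sc_binop_below0_of_separated o (S : seq (nat * nat)) :
  bound Pref o r1.+1 r2.+1 <= size S -> uniq S ->
  {in S &, forall s s', s != s' -> separated (binop o K L) (ab a b s.1 s.2) (ab a b s'.1 s'.2)} ->
  sc (binop o K L) (size S).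
Proof.
move=> le_S uniq_S sep_S.
have cK : in_class Pref K by apply: below0_in_class.
have cL : in_class Pref L by apply: below0_in_class.
have [k le_k sc_k] := @sc_binop_le_bound _ Pref o _ _ r1.+1 r2.+1 r1_gt0 r2_gt0
  (@sc_below _ pred0 a r1 isT) (@sc_below _ pred0 b r2 isT) cK cL.
apply: (sc_of_separated (rep := fun s => ab a b s.1 s.2) sc_k) => //.
exact: leq_trans le_S.
Qed.

Lemma sc_inter_below0 : sc (binop Inter K L) (r1 * r2).+1.
Proof.
have <- : size ((r1, 0) :: grid r1 r2) = (r1 * r2).+1 by rewrite /= size_grid.
apply: sc_binop_below0_of_separated.
- by rewrite /= size_grid /bound; lia.
- by rewrite /= grid_uniq mem_grid ltnn.
apply: (separated_lex (rep := fun s => ab a b s.1 s.2)) => [i j i' j'|i j j'];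
  rewrite !inE !xpair_eqE !mem_grid => s s' lt.
- by apply: separated_fst_inter => //=; lia.
- by apply: separated_snd_live => //=; lia.
Qed.

Lemma sc_diff_below0 : sc (binop Diff K L) (r1 * r2.+1).+1.
Proof.
have <- : size ((r1, 0) :: grid r1 r2.+1) = (r1 * r2.+1).+1 by rewrite /= size_grid.
apply: sc_binop_below0_of_separated.
- by rewrite /= size_grid /bound; lia.
- by rewrite /= grid_uniq mem_grid ltnn.
apply: (separated_lex (rep := fun s => ab a b s.1 s.2)) => [i j i' j'|i j j'];
  rewrite !inE !xpair_eqE !mem_grid => s s' lt.
- by apply: separated_fst => //=; lia.
- by apply: separated_snd_live => //=; lia.
Qed.

Lemma sc_union_below0 o : o <> Inter -> o <> Diff -> sc (binop o K L) (r1.+1 * r2.+1).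
Proof.
move=> oI oD; rewrite -size_grid; apply: sc_binop_below0_of_separated.
- by rewrite size_grid; case: o oI oD.
- exact: grid_uniq.
apply: (separated_lex (rep := fun s => ab a b s.1 s.2)) => [i j i' j'|i j j'];
  rewrite !mem_grid => s s' lt.
- by apply: separated_fst => //=; lia.
- by apply: separated_snd => //=; lia.
Qed.

Lemma sc_binop_below0 o : sc (binop o K L) (bound Pref o r1.+1 r2.+1).
Proof.
case: o; rewrite /bound.
- have -> : r1.+1 * r2.+1 - (r1.+1 + r2.+1 - 2) = (r1 * r2).+1 by lia.
  exact: sc_inter_below0.
- exact: sc_union_below0.
- have -> : r1.+1 * r2.+1 - (r2.+1 - 1) = (r1 * r2.+1).+1 by lia.
  exact: sc_diff_below0.
- exact: sc_union_below0.
Qed.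

End TightPrefix.

Section TightSuffix.
Variables (T : eqType) (a b c d : T) (r1 r2 : nat).
Hypotheses (a_b : a != b) (a_c : a != c) (a_d : a != d) (b_c : b != c) (b_d : b != d)
  (c_d : c != d) (r1_gt0 : 0 < r1) (r2_gt0 : 0 < r2).
Local Notation K := (below (pred1 c) a r1).
Local Notation L := (below (pred1 d) b r2).

Let b_a : b != a. Proof. by rewrite eq_sym. Qed.
Let c_b : c != b. Proof. by rewrite eq_sym. Qed.
Let d_a : d != a. Proof. by rewrite eq_sym. Qed.
Let d_c : d != c. Proof. by rewrite eq_sym. Qed.

Lemma separated_fst_reset i j i' j' : i < i' -> i' <= r1 ->
  separated (binop Inter K L) (ab a b i j) (ab a b i' j').
Proof.
move=> lt le; apply: (separated_abP a_b _ _ _ _ (x := d :: nseq (r1 - i') a)) => //.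
have eK k : rcount (pred1 c) a k (d :: nseq (r1 - i') a) = k + (r1 - i').
  by rewrite rcount_skip // rcount_nseq.
have eL k : rcount (pred1 d) b k (d :: nseq (r1 - i') a) = 0.
  by rewrite (@rcount_reset _ (pred1 d) b _ d _ (eqxx d)) rcount_nseq_skip.
by rewrite !eK !eL addn_subn_ltn // addn_subnK_ltnF // r2_gt0.
Qed.

Lemma separated_snd_reset o i j j' : o <> Union -> o <> Symdiff -> j < j' -> j' <= r2 ->
  separated (binop o K L) (ab a b i j) (ab a b i j').
Proof.
move=> oU oS lt le; apply: (separated_abP a_b _ _ _ _ (x := c :: nseq (r2 - j') b)) => //.
have eK k : rcount (pred1 c) a k (c :: nseq (r2 - j') b) = 0.
  by rewrite (@rcount_reset _ (pred1 c) a _ c _ (eqxx c)) rcount_nseq_skip.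
have eL k : rcount (pred1 d) b k (c :: nseq (r2 - j') b) = k + (r2 - j').
  by rewrite rcount_skip // rcount_nseq.
rewrite !eK !eL addn_subn_ltn // addn_subnK_ltnF // r1_gt0.
by case: o oU oS.
Qed.

Lemma sc_binop_below_reset o : sc (binop o K L) (r1.+1 * r2.+1).
Proof.
have sep : {in grid r1.+1 r2.+1 &, forall s s', s != s' ->
    separated (binop o K L) (ab a b s.1 s.2) (ab a b s'.1 s'.2)}.
  apply: (separated_lex (rep := fun s => ab a b s.1 s.2)) => [i j i' j'|i j j'];
    rewrite !mem_grid => s s' lt.
  - by case: o; [apply: separated_fst_reset | apply: separated_fst ..] => //=; lia.
  - by case: o; [apply: separated_snd_reset | apply: separated_snd
                | apply: separated_snd_reset | apply: separated_snd] => //=; lia.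
have [k le_k sc_k] := @sc_binop_le_bound _ Suff o _ _ r1.+1 r2.+1 r1_gt0 r2_gt0
  (@sc_below _ (pred1 c) a r1 a_c) (@sc_below _ (pred1 d) b r2 b_d)
  (@below_suffix_closed _ _ a r1) (@below_suffix_closed _ _ b r2).
rewrite -(size_grid r1.+1 r2.+1).
by apply: (sc_of_separated (rep := fun s => ab a b s.1 s.2) sc_k); rewrite ?size_grid ?grid_uniq.
Qed.

End TightSuffix.

Lemma four_letters (T : finType) : 4 <= #|T| -> exists a b c d : T, uniq [:: a; b; c; d].
Proof.
rewrite cardE; have := enum_uniq T.
case: (enum T) => [|a [|b [|c [|d s]]]] // uniq_abcds _.
by exists a, b, c, d; apply: subseq_uniq uniq_abcds; apply: (prefix_subseq [:: a; b; c; d] s).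
Qed.

Theorem sc_binop_bound_tight (T : finType) c o m n : 4 <= #|T| -> 1 < m -> 1 < n ->
  exists K L : lang T,
    [/\ in_class c K, in_class c L, sc K m, sc L n & sc (binop o K L) (bound c o m n)].
Proof.
move=> /four_letters [a [b [e [f]]]].
rewrite /= !inE !negb_or => /and4P [/and3P [a_b a_e a_f] /andP [b_e b_f] e_f _].
case: m n => [|r1] [|r2] // r1_gt0 r2_gt0.
have prefix_tight c' : c' <> Suff -> exists K L : lang T,
    [/\ in_class c' K, in_class c' L, sc K r1.+1, sc L r2.+1 & sc (binop o K L) (bound c' o r1.+1 r2.+1)].
  move=> nSuff; exists (below pred0 a r1), (below pred0 b r2).
  split; try exact: below0_in_class; try exact: sc_below.
  by case: c' nSuff => // _; exact: sc_binop_below0.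
case: c; try by apply: prefix_tight.
exists (below (pred1 e) a r1), (below (pred1 f) b r2); split; try exact: below_suffix_closed.
- exact: sc_below.
- exact: sc_below.
- exact: sc_binop_below_reset.
Qed.

Theorem theorem2 :
  (forall (T : finType) (c : lclass) (o : lop) (K L : lang T) (m n : nat),
      2 <= m -> 2 <= n -> sc K m -> sc L n -> in_class c K -> in_class c L ->
      exists k, sc (binop o K L) k /\ k <= bound c o m n)
  /\
  (forall (T : finType), 4 <= #|T| ->
   forall (c : lclass) (o : lop) (m n : nat), 2 <= m -> 2 <= n ->
   exists K L : lang T,
     [/\ in_class c K, in_class c L, sc K m, sc L n & sc (binop o K L) (bound c o m n)]).
Proof.
split=> [T c o K L m n lt1m lt1n scK scL cK cL|T card_T c o m n]; last exact: sc_binop_bound_tight.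
by have [k le_k sc_k] := sc_binop_le_bound o lt1m lt1n scK scL cK cL; exists k.
Qed.
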